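(* Let $n\ge 2$, $k\ge 1$, and let $\pi$ be an even permutation of the vertex set $\{0,\dots,k+1\}$ of $K_{k+2}$. Then $c_{n,k}\simeq \pi\circ c_{n,k}$ as graph homomorphisms $\overline{SG}_{n,k}\to K_{k+2}$.
   Context: Let $m=2n+k$. A subset $S\subseteq\{0,\dots,m-1\}$ is semi-stable if $\{i,i+1\}\not\subseteq S$ for all $0\le i\le m-2$. The semi-stable Kneser graph $\overline{SG}_{n,k}$ has as vertices the semi-stable $n$-element subsets of $\{0,\dots,m-1\}$, two being adjacent iff they are disjoint. $K_{k+2}$ is the loopless complete graph on $\{0,\dots,k+1\}$, and $c_{n,k}\colon\overline{SG}_{n,k}\to K_{k+2}$ is the canonical colouring $S\mapsto\min S$. For graphs $G,H$ and maps $f,g\colon V(G)\to V(H)$, write $f\sim g$ if $(f(u),g(v))\in E(H)$ for all $(u,v)\in E(G)$. For graph homomorphisms $f,g\colon G\to H$, $f\simeq g$ means there are graph homomorphisms $f=f_0,f_1,\dots,f_N=g$ ($N\ge0$) with $f_{i}\sim f_{i+1}$ for all $i$. *)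

From mathcomp Require Import all_boot all_order all_fingroup.
Set Implicit Arguments. Unset Strict Implicit. Unset Printing Implicit Defensive.

Definition semi_stable (m : nat) (S : {set 'I_m}) : bool :=
  [forall i : 'I_m, forall j : 'I_m, (val j == (val i).+1) ==> ~~ ((i \in S) && (j \in S))].

Definition ssk_vertex_pred (n k : nat) (S : {set 'I_(2 * n + k)}) : bool :=
  @semi_stable (2 * n + k) S && (#|S| == n).

Definition SSK (n k : nat) := {S : {set 'I_(2 * n + k)} | @ssk_vertex_pred n k S}.

Definition ssk_adj (n k : nat) (S T : SSK n k) : bool :=
  [disjoint val S & val T].

Definition K_adj (k : nat) (a b : 'I_(k.+2)) : bool := a != b.

Definition canon_col (n k : nat) (S : SSK n k) : 'I_(k.+2) :=
  inord (\big[minn/(2 * n + k)]_(i in val S) val i).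

Definition rel_maps (V W : Type) (eG : V -> V -> bool) (eH : W -> W -> bool)
  (f g : V -> W) : Prop := forall u v, eG u v -> eH (f u) (g v).

Definition is_hom (V W : Type) (eG : V -> V -> bool) (eH : W -> W -> bool)
  (f : V -> W) : Prop := rel_maps eG eH f f.

Definition hom_homotopic (V W : Type) (eG : V -> V -> bool) (eH : W -> W -> bool)
  (f g : V -> W) : Prop :=
  exists (N : nat) (F : nat -> V -> W),
    F 0 = f /\ F N = g /\
    (forall i, i <= N -> is_hom eG eH (F i)) /\
    (forall i, i < N -> rel_maps eG eH (F i) (F i.+1)).

From mathcomp Require Import all_boot all_order all_fingroup zify.
From Stdlib Require Import FunctionalExtensionality.
Set Implicit Arguments. Unset Strict Implicit. Unset Printing Implicit Defensive.

(* Homotopy of colourings is an equivalence relation stable under composition with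
   automorphisms of K_{k+2}, so the permutations pi with c ~= pi o c form a monoid and it
   suffices to treat the 3-cycles (lo lo+1 lo+2), lo < k, which generate the alternating
   group. Every elementary homotopy step recolours some vertices with colours unused on
   their neighbourhoods. Lowering a threshold h from 2n+k to lo+2n and recolouring each S
   with max S > h by max S + 2 - 2n leads to a colouring that uses lo, lo+1, lo+2 exactly
   on the sets S inside [lo, lo+2n], coloured by min S. Five recolourings of these sets then
   rotate the three colours. They stay proper because, for n >= 2, a set of minimum lo+1
   disjoint from one of minimum lo+2 meets every pivot (a set of minimum lo disjoint from
   one of minimum lo+2): by counting, both contain lo+3. *)

Section Homotopy.
Variables (V W : Type) (eG : V -> V -> bool) (eH : W -> W -> bool).
Local Notation homotopic := (hom_homotopic eG eH).

Lemma homotopic_refl f : is_hom eG eH f -> homotopic f f.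
Proof. by move=> hf; exists 0, (fun _ => f). Qed.

Lemma rel_maps_homotopic f g :
  is_hom eG eH f -> is_hom eG eH g -> rel_maps eG eH f g -> homotopic f g.
Proof.
move=> hf hg hfg; exists 1, (fun i => if i == 0 then f else g).
by split=> //; split=> //; split=> -[|[|i]].
Qed.

Lemma homotopic_trans f g h : homotopic f g -> homotopic g h -> homotopic f h.
Proof.
move=> [N1 [F1 [F10 [F1N [F1h F1r]]]]] [N2 [F2 [F20 [F2N [F2h F2r]]]]].
exists (N1 + N2), (fun i => if i < N1 then F1 i else F2 (i - N1)); split.
  by case: N1 F1N {F1h F1r} => [|N1] /= F1N; rewrite -F10 // F20 -F1N.
split; first by rewrite ltnNge leq_addr addKn.
split=> i Hi; cbv beta.
  by case: (ltnP i N1) => H; [apply: F1h | apply: F2h]; lia.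
case: (ltnP i.+1 N1) => H.
  by rewrite (_ : i < N1); [apply: F1r |]; lia.
case: (ltnP i N1) => H'.
  have -> : i.+1 - N1 = 0 by lia.
  by rewrite F20 -F1N (_ : N1 = i.+1); [apply: F1r | ]; lia.
rewrite (_ : i.+1 - N1 = (i - N1).+1); last by lia.
by apply: F2r; lia.
Qed.

Lemma homotopic_sym f g :
  (forall u v, eG u v -> eG v u) -> (forall a b, eH a b -> eH b a) ->
  homotopic f g -> homotopic g f.
Proof.
move=> sG sH [N [F [F0 [FN [Fh Fr]]]]].
exists N, (fun i => F (N - i)); rewrite subn0 subnn; split=> //; split=> //; split.
  by move=> i Hi; apply: Fh; lia.
move=> i Hi u v /sG vu; have lt_N : N - i.+1 < N by lia.
by have := Fr _ lt_N v u vu; rewrite (_ : (N - i.+1).+1 = N - i); [apply: sH | lia].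
Qed.

Lemma homotopic_eqfun f f' g g' :
  f =1 f' -> g =1 g' -> homotopic f g -> homotopic f' g'.
Proof. by move=> /functional_extensionality -> /functional_extensionality ->. Qed.

Lemma homotopic_postcomp (p : W -> W) f g :
  (forall a b, eH a b -> eH (p a) (p b)) ->
  homotopic f g -> homotopic (p \o f) (p \o g).
Proof.
move=> hp [N [F [F0 [FN [Fh Fr]]]]].
exists N, (fun i => p \o F i); rewrite F0 FN; split=> //; split=> //; split=> i Hi u v /=.
  by move/(Fh i Hi); apply: hp.
by move/(Fr i Hi); apply: hp.
Qed.

End Homotopy.

Definition recolour_ok (W : eqType) (fu fv gu gv : W) : bool :=
  ((fv != gv) ==> (fu != gv)) && ((fu == gu) || (fv == gv)).

Section Recolouring.
Variables (V : Type) (W : eqType) (eG : V -> V -> bool).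
Hypothesis eG_sym : forall u v, eG u v -> eG v u.
Local Notation neq := (fun a b : W => a != b).
Variables f g : V -> W.
Hypothesis (fg_ok : forall u v, eG u v -> recolour_ok (f u) (f v) (g u) (g v)).

Lemma recolour_rel_maps : is_hom eG neq f -> rel_maps eG neq f g.
Proof.
move=> hf u v uv; have /andP [/implyP moved _] := fg_ok uv.
by case: (eqVneq (f v) (g v)) => [<-|/moved //]; apply: hf.
Qed.

Lemma recolour_is_hom : rel_maps eG neq f g -> is_hom eG neq g.
Proof.
move=> fg u v uv; have /andP [_ /orP [] /eqP <-] := fg_ok uv; first exact: fg.
by rewrite eq_sym; apply/fg/eG_sym.
Qed.

Lemma recolour_homotopic : is_hom eG neq f ->
  is_hom eG neq g /\ hom_homotopic eG neq f g.
Proof.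
move=> hf; have fg := recolour_rel_maps hf; have hg := recolour_is_hom fg.
by split=> //; apply: rel_maps_homotopic.
Qed.

End Recolouring.

Lemma K_adj_sym k (a b : 'I_k.+2) : K_adj a b -> K_adj b a.
Proof. by rewrite /K_adj eq_sym. Qed.

Lemma K_adj_perm k (p : {perm 'I_k.+2}) a b : K_adj a b -> K_adj (p a) (p b).
Proof. by rewrite /K_adj (inj_eq perm_inj). Qed.

Definition adj_tperm k (i : nat) : {perm 'I_k.+2} := tperm (inord i) (inord i.+1).

Lemma inord_eq k x y : x <= k.+1 -> y <= k.+1 ->
  (inord x == inord y :> 'I_k.+2) = (x == y).
Proof. by move=> hx hy; rewrite -val_eqE /= !inordK. Qed.

Lemma tperm_inord k a b x : a <= k.+1 -> b <= k.+1 -> x <= k.+1 ->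
  tperm (inord a) (inord b) (inord x : 'I_k.+2) =
  inord (if x == a then b else if x == b then a else x).
Proof.
move=> ha hb hx; case: (eqVneq x a) => [->|xa]; first by rewrite tpermL.
case: (eqVneq x b) => [->|xb]; first by rewrite tpermR.
by rewrite tpermD // inord_eq // eq_sym.
Qed.

Lemma adj_tperm2 k i : (adj_tperm k i * adj_tperm k i = 1)%g.
Proof. exact: tperm2. Qed.

Lemma odd_adj_tpermM k i p : i <= k ->
  odd_perm (adj_tperm k i * p)%g = ~~ odd_perm p.
Proof. by move=> hi; rewrite odd_mul_tperm inord_eq //; lia. Qed.

Lemma gen_adj_tperm k :
  <<[set adj_tperm k i | i : 'I_k.+1]>>%g = [set: {perm 'I_k.+2}].
Proof.
set A := [set _ | _ in _]; apply/eqP; rewrite eqEsubset subsetT /=.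
rewrite -(gen_tperm (inord 0)) gen_subG; apply/subsetP => _ /imsetP [y _ ->].
have sA i : i <= k -> adj_tperm k i \in <<A>>%g.
  by move=> hi; apply/mem_gen/imsetP; exists (inord i); rewrite ?inordK.
rewrite -(inord_val y); move: (ltn_ord y); elim: (val y) => [|m IH] hm.
  by rewrite tperm1 group1.
case: m IH hm => [|m] IH hm; first exact: sA.
have -> : tperm (inord 0) (inord m.+2) =
    (tperm (inord 0) (inord m.+1) ^ adj_tperm k m.+1)%g :> {perm _}.
  by rewrite tpermJ /adj_tperm tpermL tpermD ?inord_eq //; lia.
by rewrite groupJ ?IH ?sA //; lia.
Qed.

Lemma mulg_through (T : finGroupType) (a b c : T) :
  (b * b = 1)%g -> (a * c = (a * b) * (b * c))%g.
Proof. by move=> bb; rewrite mulgA -(mulgA a) bb mulg1. Qed.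

Section EvenPermInd.
Variables (k : nat) (P : {perm 'I_k.+2} -> Prop).
Hypotheses (P1 : P 1%g) (PM : forall p q, P p -> P q -> P (p * q)%g).
Hypothesis P_cycle3 : forall i, i < k -> P (adj_tperm k i * adj_tperm k i.+1)%g.
Local Notation s := (adj_tperm k).

Lemma even_perm_ind_inv p : P p -> P p^-1%g.
Proof.
move=> Pp; rewrite invg_expg; elim: _.-1 => [|j IH]; first by rewrite expg0.
by rewrite expgS; apply: PM.
Qed.

Lemma even_perm_ind_adj2 i j : i <= k -> j <= k -> P (s i * s j)%g.
Proof.
have up d i' : i' + d < k -> P (s i' * s (i' + d).+1)%g.
  elim: d => [|d IH] hd; first by rewrite addn0; apply: P_cycle3; lia.
  by rewrite (mulg_through _ _ (adj_tperm2 k (i' + d).+1)) addnS; apply: PM;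
    [apply: IH | apply: P_cycle3]; lia.
move=> hi hj; case: (ltngtP i j) => hij.
- by rewrite (_ : j = (i + (j - i).-1).+1); [apply: up |]; lia.
- have -> : (s i * s j = (s j * s i)^-1)%g by rewrite invMg /adj_tperm !tpermV.
  apply: even_perm_ind_inv.
  by rewrite (_ : i = (j + (i - j).-1).+1); [apply: up |]; lia.
- by rewrite hij adj_tperm2.
Qed.

Lemma even_perm_ind_parity p : if odd_perm p then P (s 0 * p)%g else P p.
Proof.
have /gen_prodgP [N [c cA ->]] : p \in <<[set s i | i : 'I_k.+1]>>%g.
  by rewrite gen_adj_tperm inE.
elim: N c cA => [|N IH] c cA; first by rewrite big_ord0 odd_perm1.
rewrite big_ord_recl; case/imsetP: (cA ord0) => i _ ->.
have hi : i <= k by rewrite -ltnS.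
set q := (\prod_(_ < N) _)%g; have := IH _ (fun j => cA (lift ord0 j)).
rewrite odd_adj_tpermM //; case: (odd_perm q) => /= Pq.
- by rewrite (mulg_through _ _ (adj_tperm2 k 0)); apply: PM; [apply: even_perm_ind_adj2 |].
- by rewrite mulgA; apply: PM; [apply: even_perm_ind_adj2 |].
Qed.

Lemma even_perm_ind p : ~~ odd_perm p -> P p.
Proof. by have := even_perm_ind_parity p; case: odd_perm. Qed.

End EvenPermInd.

Definition rot3 (lo x : nat) : nat :=
  if x == lo then lo + 2 else if x == lo + 1 then lo else if x == lo + 2 then lo + 1 else x.

Lemma cycle3_inord k lo x : lo < k -> x <= k.+1 ->
  (adj_tperm k lo * adj_tperm k lo.+1)%g (inord x) = inord (rot3 lo x).
Proof.
move=> lo_lt hx; rewrite permM /adj_tperm /rot3 !tperm_inord.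
  by congr inord; do !case: eqP; lia.
all: by do ?case: ifP; lia.
Qed.

Lemma card_interval m a d : #|[set i : 'I_m | a <= i < a + d]| <= d.
Proof.
rewrite cardE -(size_map val) -{2}(size_iota a d); apply: uniq_leq_size.
  by rewrite map_inj_uniq ?enum_uniq //; apply: val_inj.
by move=> _ /mapP [i + ->]; rewrite mem_enum inE mem_iota.
Qed.

Lemma disjoint_cover_memr (T : finType) (A B W : {set T}) x :
  [disjoint A & B] -> #|W| <= #|A| + #|B| -> A :|: B \subset W ->
  x \in W -> x \notin A -> x \in B.
Proof.
move=> dAB cW sABW + xA; have <- : A :|: B = W.
  by apply/eqP; rewrite eqEcard sABW cardsU (disjoint_setI0 dAB) cards0 subn0.
by rewrite inE (negbTE xA).
Qed.

Section SemiStableKneser.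
Variables n k : nat.
Implicit Types (S T : SSK n k) (f g : SSK n k -> nat).
Local Notation homotopic := (hom_homotopic (@ssk_adj n k) (@K_adj k)).

Definition vmin S : nat := \big[minn/(2 * n + k)]_(i in val S) val i.
Definition vmax S : nat := \max_(i in val S) val i.

Lemma card_ssk S : #|val S| = n.
Proof. by case/andP: (valP S) => _ /eqP. Qed.

Lemma ssk_nonconsecutive S (i j : 'I_(2 * n + k)) :
  i \in val S -> j \in val S -> j != i.+1 :> nat.
Proof.
case/andP: (valP S) => /forallP/(_ i)/forallP/(_ j)/implyP ss _ Si Sj.
by apply/negP => /ss; rewrite Si Sj.
Qed.

Lemma vmin_le S i : i \in val S -> vmin S <= i.
Proof. exact: (@Order.TotalTheory.bigmin_le_cond _ nat _ _ i). Qed.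

Lemma vmax_ge S i : i \in val S -> i <= vmax S.
Proof. exact: leq_bigmax_cond. Qed.

Lemma card_ssk_interval S a j : #|[set i in val S | a <= i < a + 2 * j]| <= j.
Proof.
set A := [set _ in _ | _].
rewrite cardE -(size_map (fun i : 'I__ => (i - a) %/ 2)) -(size_iota 0 j).
apply: uniq_leq_size.
  rewrite map_inj_in_uniq ?enum_uniq // => x y.
  rewrite !mem_enum !inE => /andP [Sx rx] /andP [Sy ry] /= exy; apply: val_inj.
  by have := ssk_nonconsecutive Sx Sy; have := ssk_nonconsecutive Sy Sx; simpl in *; lia.
by move=> _ /mapP [i + ->]; rewrite mem_enum inE mem_iota => /andP [_] /=; lia.
Qed.

Lemma ssk_adj_sym S T : ssk_adj S T -> ssk_adj T S.
Proof. by rewrite /ssk_adj disjoint_sym. Qed.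

Lemma adj_val_neq S T i j : ssk_adj S T -> i \in val S -> j \in val T -> i != j :> nat.
Proof.
by move=> dST Si Tj; apply: contraTneq Tj => /val_inj <-; rewrite (disjointFr dST Si).
Qed.

Definition ncol f S : 'I_k.+2 := inord (f S).
Definition bounded_col f := forall S, f S <= k.+1.
Definition is_colouring f := forall S T, ssk_adj S T -> f S != f T.

Lemma ncol_eq f g S T : bounded_col f -> bounded_col g ->
  (ncol f S == ncol g T) = (f S == g T).
Proof. by move=> bf bg; rewrite inord_eq. Qed.

Lemma ncol_hom f : bounded_col f -> is_colouring f ->
  is_hom (@ssk_adj n k) (@K_adj k) (ncol f).
Proof. by move=> bf cf S T adj; rewrite /K_adj ncol_eq //; apply: cf. Qed.

Lemma ncol_recolour f g : bounded_col f -> bounded_col g -> is_colouring f ->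
  (forall S T, ssk_adj S T -> recolour_ok (f S) (f T) (g S) (g T)) ->
  is_colouring g /\ homotopic (ncol f) (ncol g).
Proof.
move=> bf bg cf fg_ok.
have [hg hfg] := @recolour_homotopic _ _ _ (@ssk_adj_sym) (ncol f) (ncol g)
  ltac:(by move=> S T; rewrite /recolour_ok !ncol_eq //; apply: fg_ok) (ncol_hom bf cf).
by split=> // S T /hg; rewrite /K_adj ncol_eq.
Qed.

Hypothesis n_gt0 : 0 < n.

Lemma vmin_mem S : exists2 i, i \in val S & nat_of_ord i = vmin S.
Proof.
have [i Si] : exists i, i \in val S by apply/card_gt0P; rewrite card_ssk.
have [j Sj eq_min] := @Order.TotalTheory.eq_bigmin _ nat _ (2 * n + k) i
  (fun i => i \in val S) val Si (fun j _ => ltnW (ltn_ord j)).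
by exists j => //; apply: esym eq_min.
Qed.

Lemma vmax_mem S : exists2 i, i \in val S & nat_of_ord i = vmax S.
Proof.
have S_gt0 : 0 < #|val S| by rewrite card_ssk.
by rewrite /vmax; have [i Si ->] := eq_bigmax_cond val S_gt0; exists i.
Qed.

Lemma vmax_lt S : vmax S < 2 * n + k.
Proof. by have [i _ <-] := vmax_mem S; apply: ltn_ord. Qed.

Lemma ssk_span S : vmin S + 2 * n <= vmax S + 2.
Proof.
rewrite leqNgt; apply/negP => short.
have : val S \subset [set i in val S | vmin S <= i < vmin S + 2 * n.-1].
  by apply/subsetP => i Si; rewrite inE Si vmin_le //; have := vmax_ge Si; lia.
move/subset_leq_card/leq_trans/(_ (card_ssk_interval S _ _)); rewrite card_ssk; lia.
Qed.

Lemma adj_vmin_neq S T : ssk_adj S T -> vmin S != vmin T.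
Proof.
move=> adj; have [i Si <-] := vmin_mem S; have [j Tj <-] := vmin_mem T.
exact: adj_val_neq adj Si Tj.
Qed.

Lemma adj_vmax_neq S T : ssk_adj S T -> vmax S != vmax T.
Proof.
move=> adj; have [i Si <-] := vmax_mem S; have [j Tj <-] := vmax_mem T.
exact: adj_val_neq adj Si Tj.
Qed.

(* [vmax S + 2 - 2n] is the largest minimum a vertex with maximum [vmax S] can have. *)
Definition sweep h S : nat := if vmax S <= h then vmin S else vmax S + 2 - 2 * n.

Lemma sweep_bounded h : bounded_col (sweep h).
Proof. by move=> S; rewrite /sweep; have := ssk_span S; have := vmax_lt S; case: ifP; lia. Qed.

Lemma sweep_colouring h : is_colouring (sweep h).
Proof.
move=> S T adj; have := adj_vmin_neq adj; have := adj_vmax_neq adj.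
by have := ssk_span S; have := ssk_span T; rewrite /sweep; do 2 case: ifP; lia.
Qed.

Lemma sweep_step h : homotopic (ncol (sweep h.+1)) (ncol (sweep h)).
Proof.
apply: (proj2 (ncol_recolour (sweep_bounded _) (sweep_bounded _) (sweep_colouring _) _)).
move=> S T adj; have := adj_vmin_neq adj; have := adj_vmax_neq adj.
have := ssk_span S; have := ssk_span T.
by rewrite /recolour_ok /sweep; do 4 case: ifP; lia.
Qed.

Lemma sweep_homotopic h d : homotopic (ncol (sweep (h + d))) (ncol (sweep h)).
Proof.
elim: d => [|d IH].
  rewrite addn0; apply/homotopic_refl/ncol_hom;
    [apply: sweep_bounded | apply: sweep_colouring].
by rewrite addnS; apply: homotopic_trans (sweep_step _) IH.
Qed.

Lemma canon_col_sweep : @canon_col n k =1 ncol (sweep (2 * n + k)).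
Proof. by move=> S; rewrite /ncol /sweep ifT //; apply/ltnW/vmax_lt. Qed.

Lemma canon_col_hom : is_hom (@ssk_adj n k) (@K_adj k) (@canon_col n k).
Proof.
move=> S T; rewrite !canon_col_sweep.
by apply: ncol_hom; [apply: sweep_bounded | apply: sweep_colouring].
Qed.

End SemiStableKneser.

Section Window.
Variables n k lo : nat.
Hypotheses (n_gt1 : 1 < n) (lo_lt_k : lo < k).
Implicit Types S T P R : SSK n k.
Local Notation homotopic := (hom_homotopic (@ssk_adj n k) (@K_adj k)).
Local Notation interval a d := [set i : 'I_(2 * n + k) | a <= i < a + d].

Let n_gt0 : 0 < n := ltnW n_gt1.

Definition in_window S := (lo <= vmin S) && (vmax S <= lo + 2 * n).

Definition pivot S := [&& in_window S, vmin S == lo &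
  [exists T, [&& in_window T, vmin T == lo + 2 & ssk_adj S T]]].

Definition near_pivot S := [exists P, pivot P && ssk_adj S P].

Lemma window_vmin S : in_window S -> lo <= vmin S <= lo + 2.
Proof. by case/andP; have := ssk_span n_gt0 S; lia. Qed.

Lemma window_mem S i : in_window S -> i \in val S -> vmin S <= i <= lo + 2 * n.
Proof. by case/andP=> _ hmax Si; rewrite vmin_le //=; apply: leq_trans (vmax_ge Si) hmax. Qed.

Lemma succ_vmin_notin S i : nat_of_ord i = (vmin S).+1 -> i \notin val S.
Proof.
move=> ei; apply/negP => Si; have [j Sj ej] := vmin_mem n_gt0 S.
by have := ssk_nonconsecutive Sj Si; rewrite ei ej eqxx.
Qed.

Lemma lo3_lt : lo + 3 < 2 * n + k.
Proof. by lia. Qed.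

Let lo3 : 'I_(2 * n + k) := Ordinal lo3_lt.

Lemma lo3_mem_middle S T : in_window S -> vmin S = lo + 2 ->
  in_window T -> vmin T = lo + 1 -> ssk_adj S T -> lo3 \in val T.
Proof.
move=> wS mS wT mT adj.
apply: (@disjoint_cover_memr _ (val S) (val T) (interval (lo + 1) (2 * n))).
- exact: adj.
- by rewrite !card_ssk; apply: leq_trans (card_interval _ _ _) _; lia.
- apply/subsetP => i; rewrite !inE => /orP [] Ui.
    by have := window_mem wS Ui; lia.
  by have := window_mem wT Ui; lia.
- by rewrite inE /=; lia.
- by apply: succ_vmin_notin; rewrite mS /=; lia.
Qed.

Lemma lo3_mem_pivot P : pivot P -> lo3 \in val P.
Proof.
case/and3P=> wP /eqP mP /existsP [R /and3P [wR /eqP mR adj]].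
apply: (@disjoint_cover_memr _ (val R) (val P)
  (interval lo 1 :|: interval (lo + 2) (2 * n - 1))).
- by apply: ssk_adj_sym.
- rewrite !card_ssk; apply: leq_trans (leq_card_setU _ _) _.
  by apply: leq_trans (leq_add (card_interval _ _ _) (card_interval _ _ _)) _; lia.
- apply/subsetP => i; rewrite !inE => /orP [] Ui.
    by have := window_mem wR Ui; lia.
  have := succ_vmin_notin (S := P) (i := i); rewrite Ui mP.
  by have := window_mem wP Ui; lia.
- by rewrite !inE /=; lia.
- by apply: succ_vmin_notin; rewrite mR /=; lia.
Qed.

Lemma middle_not_near_pivot S T : in_window S -> vmin S = lo + 2 ->
  in_window T -> vmin T = lo + 1 -> ssk_adj S T -> ~~ near_pivot T.
Proof.
move=> wS mS wT mT adj; apply/existsP => -[P /andP [pP adjTP]].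
by have := disjointFr adjTP (lo3_mem_middle wS mS wT mT adj); rewrite lo3_mem_pivot.
Qed.

(* Stage 1 sends the non-pivots of minimum [lo] to [lo + 2], stage 2 the sets of minimum
   [lo + 1] not near a pivot to [lo], stage 3 the sets of minimum [lo + 2] to [lo + 1],
   stage 4 the pivots to [lo + 2] and stage 5 the remaining sets of minimum [lo + 1] to
   [lo]. *)
Definition window_offset (j a : nat) (p q : bool) : nat :=
  match a with
  | 0 => if (0 < j) && ~~ p || (3 < j) then 2 else 0
  | 1 => if (1 < j) && ~~ q || (4 < j) then 0 else 1
  | _ => if 2 < j then 1 else 2
  end.

Definition window_compat (a : nat) (p : bool) (b : nat) (p' q' : bool) :=
  [&& a <= 2, a != b, p ==> (a == 0), (a == 2) && (b == 0) ==> p',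
      p ==> q' & ~~ [&& a == 2, b == 1 & q']].

Lemma window_offset_step j a p q b p' q' : j < 5 ->
  window_compat a p b p' q' -> window_compat b p' a p q ->
  recolour_ok (window_offset j a p q) (window_offset j b p' q')
    (window_offset j.+1 a p q) (window_offset j.+1 b p' q').
Proof.
case: j => [|[|[|[|[|j]]]]] // _; case: a => [|[|[|a]]]; case: b => [|[|[|b]]];
  by case: p; case: q; case: p'; case: q'.
Qed.

Lemma window_compat_adj S T : in_window S -> in_window T -> ssk_adj S T ->
  window_compat (vmin S - lo) (pivot S) (vmin T - lo) (pivot T) (near_pivot T).
Proof.
move=> wS wT adj; have := window_vmin wS; have := window_vmin wT.
have := adj_vmin_neq n_gt0 adj => neq rT rS.
apply/and5P; split; [lia | lia | | | apply/andP; split].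
- by apply/implyP => /and3P [_ /eqP -> _]; rewrite subnn.
- apply/implyP => /andP [/eqP aS /eqP aT]; rewrite /pivot wT eqn_leq.
  apply/and3P; split; [lia | lia | apply/existsP; exists S].
  by rewrite wS ssk_adj_sym //=; lia.
- by apply/implyP => pS; apply/existsP; exists S; rewrite pS ssk_adj_sym.
- by apply/negP => /and3P [/eqP aS /eqP aT]; apply/negP/(middle_not_near_pivot wS _ wT); lia.
Qed.

Definition window_col j S : nat :=
  if in_window S then lo + window_offset j (vmin S - lo) (pivot S) (near_pivot S)
  else sweep (lo + 2 * n) S.

Lemma window_offset_le2 j a p q : window_offset j a p q <= 2.
Proof. by case: a => [|[|a]] /=; do !case: ifP. Qed.

Lemma window_offset0 a p q : a <= 2 -> window_offset 0 a p q = a.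
Proof. by case: a => [|[|[|a]]]. Qed.

Lemma window_col_bounded j : bounded_col (window_col j).
Proof.
move=> S; rewrite /window_col; case: ifP => _; last exact: sweep_bounded.
by have := window_offset_le2 j (vmin S - lo) (pivot S) (near_pivot S); lia.
Qed.

Lemma sweep_outside_window S : ~~ in_window S ->
  (sweep (lo + 2 * n) S < lo) || (lo + 2 < sweep (lo + 2 * n) S).
Proof. by rewrite /in_window /sweep; have := ssk_span n_gt0 S; case: ifP; lia. Qed.

Lemma window_col0 : window_col 0 =1 sweep (lo + 2 * n).
Proof.
move=> S; rewrite /window_col; case: ifP => // wS; have := window_vmin wS.
rewrite /sweep ifT; last by case/andP: wS.
by move=> r; rewrite window_offset0; lia.
Qed.

Lemma window_step j : j < 5 -> is_colouring (window_col j) ->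
  is_colouring (window_col j.+1) /\
  homotopic (ncol (window_col j)) (ncol (window_col j.+1)).
Proof.
move=> hj cj; apply: ncol_recolour (window_col_bounded j) (window_col_bounded j.+1) cj _.
move=> S T adj; rewrite /window_col.
case: (boolP (in_window T)) => wT; last by rewrite /recolour_ok eqxx orbT.
case: (boolP (in_window S)) => wS.
  have := window_offset_step hj (window_compat_adj wS wT adj)
    (window_compat_adj wT wS (ssk_adj_sym adj)).
  by rewrite /recolour_ok !eqn_add2l.
rewrite /recolour_ok eqxx andbT; have := sweep_outside_window wS.
by have := window_offset_le2 j.+1 (vmin T - lo) (pivot T) (near_pivot T); lia.
Qed.

Lemma window_homotopic j : j <= 5 ->
  is_colouring (window_col j) /\
  homotopic (ncol (window_col 0)) (ncol (window_col j)).
Proof.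
elim: j => [_|j IH hj].
  have c0 : is_colouring (window_col 0).
    by move=> S T; rewrite !window_col0; apply: sweep_colouring.
  by split=> //; apply/homotopic_refl/ncol_hom => //; apply: window_col_bounded.
have [cj hom0j] := IH (ltnW hj); have [cj1 homj] := window_step hj cj.
by split=> //; apply: homotopic_trans hom0j homj.
Qed.

Lemma window_offset5 a p q : a <= 2 -> lo + window_offset 5 a p q = rot3 lo (lo + a).
Proof. by rewrite /rot3; case: a => [|[|[|a]]] ha /=; do !case: ifP; lia. Qed.

Lemma window_col5 : window_col 5 =1 rot3 lo \o sweep (lo + 2 * n).
Proof.
move=> S; rewrite /window_col /=; case: ifP => wS.
  have /andP [lo_le le_lo2] := window_vmin wS; rewrite /sweep ifT; last by case/andP: wS.
  by rewrite window_offset5 ?subnKC //; lia.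
by have := sweep_outside_window (negbT wS); rewrite /rot3; do !case: eqP; lia.
Qed.

Lemma window_rotation :
  homotopic
    (@canon_col n k) ((adj_tperm k lo * adj_tperm k lo.+1)%g \o @canon_col n k).
Proof.
set c3 := (_ * _)%g; pose s0 := @sweep n k (lo + 2 * n).
have to_s0 : homotopic (@canon_col n k) (ncol s0).
  have := sweep_homotopic k n_gt0 (lo + 2 * n) (k - lo).
  rewrite (_ : lo + 2 * n + (k - lo) = 2 * n + k); last by lia.
  by apply: homotopic_eqfun => // S; rewrite canon_col_sweep.
have rotate : homotopic (ncol s0) (c3 \o ncol s0).
  have := proj2 (window_homotopic (leqnn 5)); apply: homotopic_eqfun => S.
    by rewrite /ncol window_col0.
  by rewrite /ncol window_col5 /= cycle3_inord //; apply: sweep_bounded.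
have from_s0 := homotopic_sym (@ssk_adj_sym n k) (@K_adj_sym k) to_s0.
exact: homotopic_trans to_s0
  (homotopic_trans rotate (homotopic_postcomp (@K_adj_perm k c3) from_s0)).
Qed.

End Window.

Theorem proposition4p4 (n k : nat) (hn : 2 <= n) (hk : 1 <= k)
  (pi : {perm 'I_(k.+2)}) (heven : ~~ odd_perm pi) :
  hom_homotopic (@ssk_adj n k) (@K_adj k)
    (@canon_col n k) (fun S => pi (canon_col S)).
Proof.
have canon_hom := @canon_col_hom n k (ltnW hn).
pose P p := hom_homotopic (@ssk_adj n k) (@K_adj k) (@canon_col n k) (p \o @canon_col n k).
apply: (@even_perm_ind _ P) heven => [||lo lo_lt_k].
- by apply: homotopic_eqfun (homotopic_refl canon_hom) => // S; rewrite /= perm1.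
- move=> p q Pp Pq.
  apply: homotopic_eqfun (homotopic_trans Pq (homotopic_postcomp (@K_adj_perm k q) Pp)) => //.
  by move=> S; rewrite /= permM.
- exact: window_rotation.
Qed.
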